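(* Let $X$ be an exponential vector space over a field $K$. If $Q(X)\neq\emptyset$, then $Q(X)$ contains a maximal orderly independent set, i.e. an orderly independent subset $B\subseteq Q(X)$ such that no orderly independent subset of $Q(X)$ properly contains $B$.
   Context: An exponential vector space (evs) over a field $K$ is a partially ordered set $(X,\leq)$ with a binary operation $+$ on $X$ and a map $K\times X\to X$, $(\alpha,x)\mapsto \alpha x$, such that: (A1) $(X,+)$ is a commutative semigroup with identity $\theta$; (A2) $x\leq y$ implies $x+z\leq y+z$ and $\alpha x\leq \alpha y$ for all $z\in X$, $\alpha\in K$; (A3) $\alpha(x+y)=\alpha x+\alpha y$, $\alpha(\beta x)=(\alpha\beta)x$, $(\alpha+\beta)x\leq \alpha x+\beta x$, $1x=x$; (A4) $\alpha x=\theta$ iff $\alpha=0$ or $x=\theta$; (A5) $x+(-1)x=\theta$ iff $x\in X_0$, where $X_0:=\{z\in X: y\not\leq z \text{ for all } y\in X\smallsetminus\{z\}\}$ (the set of minimal elements, called the primitive space; it is a vector space over $K$); (A6) for each $x\in X$ there is $p\in X_0$ with $p\leq x$. For $x\in X\smallsetminus X_0$ let $L(x):=\{z\in X: z\geq \alpha x+p \text{ for some } \alpha\in K\smallsetminus\{0\},\ p\in X_0\}$. Elements $x,y\in X\smallsetminus X_0$ are orderly dependent if $x\in L(y)$ or $y\in L(x)$, and orderly independent otherwise; a subset $B\subseteq X\smallsetminus X_0$ is orderly independent if any two distinct members of $B$ are orderly independent. For $x\in X$ write $\downarrow x:=\{z\in X: z\leq x\}$. The feasible set is $Q(X):=\{x\in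 X\smallsetminus X_0: (\downarrow x\smallsetminus X_0)\subseteq L(x)\}$. *)

From mathcomp Require Import all_boot all_algebra.
Set Implicit Arguments. Unset Strict Implicit. Unset Printing Implicit Defensive.
Import GRing.Theory.
Local Open Scope ring_scope.

Section EVS.
Variables (K : fieldType) (X : Type).
Variables (le : X -> X -> Prop) (add : X -> X -> X) (smul : K -> X -> X) (theta : X).

Definition prim (z : X) : Prop := forall y : X, y <> z -> ~ le y z.

Definition is_evs : Prop :=
  (forall x, le x x) /\
  (forall x y, le x y -> le y x -> x = y) /\
  (forall x y z, le x y -> le y z -> le x z) /\
  (forall x y z, add x (add y z) = add (add x y) z) /\
  (forall x y, add x y = add y x) /\
  (forall x, add x theta = x) /\
  (forall x y z, le x y -> le (add x z) (add y z)) /\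
  (forall x y (a : K), le x y -> le (smul a x) (smul a y)) /\
  (forall (a : K) x y, smul a (add x y) = add (smul a x) (smul a y)) /\
  (forall (a b : K) x, smul a (smul b x) = smul (a * b) x) /\
  (forall (a b : K) x, le (smul (a + b) x) (add (smul a x) (smul b x))) /\
  (forall x, smul 1 x = x) /\
  (forall (a : K) x, smul a x = theta <-> (a = 0 \/ x = theta)) /\
  (forall x, add x (smul (-1) x) = theta <-> prim x) /\
  (forall x, exists p, prim p /\ le p x).

Definition Lset (x : X) : X -> Prop :=
  fun z => exists (a : K) (p : X), a != 0 /\ prim p /\ le (add (smul a x) p) z.

Definition orderly_dependent (x y : X) : Prop := Lset y x \/ Lset x y.

Definition orderly_independent_set (B : X -> Prop) : Prop :=
  (forall x, B x -> ~ prim x) /\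
  (forall x y, B x -> B y -> x <> y -> ~ orderly_dependent x y).

Definition feasible (x : X) : Prop :=
  ~ prim x /\ (forall z, le z x -> ~ prim z -> Lset x z).

End EVS.

From mathcomp Require Import all_boot all_algebra.
From mathcomp Require Import boolp classical_sets.
Set Implicit Arguments. Unset Strict Implicit. Unset Printing Implicit Defensive.

(* Zorn's lemma: the union of a chain of orderly independent subsets of Q(X)
   is again one, because any two of its elements already lie in a common member
   of the chain. *)

Section MaximalPairwiseSubset.
Local Open Scope classical_set_scope.
Variables (T : Type) (S : set T) (R : T -> T -> Prop).

Definition pairwise_on (A : set T) : Prop :=
  forall x y, A x -> A y -> x <> y -> R x y.

Lemma bigcup_chain_pairwise (F : set (set T)) :
  (forall A, F A -> pairwise_on A) -> total_on F subset ->
  pairwise_on (\bigcup_(A in F) A).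
Proof.
move=> Fpw Ftot x y [A FA Ax] [B FB By].
have [AB|BA] := Ftot _ _ FA FB.
- exact: Fpw _ FB _ _ (AB _ Ax) By.
- exact: Fpw _ FA _ _ Ax (BA _ By).
Qed.

Lemma ex_maximal_pairwise_subset :
  exists2 B, B `<=` S /\ pairwise_on B &
    forall C, C `<=` S -> pairwise_on C -> B `<=` C -> C `<=` B.
Proof.
have [|B [[BS Bpw] Bmax]] :=
  @Zorn_bigcup T (fun A => A `<=` S /\ pairwise_on A).
  move=> F FP Ftot; split; first by move=> x [A /FP[AS _]] /AS.
  by apply: bigcup_chain_pairwise => // A /FP[].
exists B => // C CS Cpw BC x Cx; apply: contrapT => Bx.
by apply: (Bmax C); split => // CB; apply: Bx (CB _ Cx).
Qed.

End MaximalPairwiseSubset.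

Lemma orderly_independent_feasibleE (K : fieldType) (X : Type)
    (le : X -> X -> Prop) (add : X -> X -> X) (smul : K -> X -> X)
    (B : X -> Prop) :
  (forall x, B x -> feasible le add smul x) ->
  orderly_independent_set le add smul B <->
  pairwise_on (fun x y => ~ orderly_dependent le add smul x y) B.
Proof.
move=> BQ; split=> [[_ //]|Bind]; by split=> // x /BQ[].
Qed.

Theorem mainTheorem6 (K : fieldType) (X : Type)
  (le : X -> X -> Prop) (add : X -> X -> X) (smul : K -> X -> X) (theta : X) :
  is_evs le add smul theta ->
  (exists x, feasible le add smul x) ->
  exists B : X -> Prop,
    (forall x, B x -> feasible le add smul x) /\
    orderly_independent_set le add smul B /\
    (forall C : X -> Prop,
        (forall x, C x -> feasible le add smul x) ->
        orderly_independent_set le add smul C ->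
        (forall x, B x -> C x) ->
        forall x, C x -> B x).
Proof.
move=> _ _.
have [B [BQ Bind] Bmax] := ex_maximal_pairwise_subset (feasible le add smul)
  (fun x y => ~ orderly_dependent le add smul x y).
exists B; split=> //; split; first exact/(orderly_independent_feasibleE BQ).
by move=> C CQ /(orderly_independent_feasibleE CQ); apply: Bmax.
Qed.
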